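(* Let $n\ge1$ and let $o_1,\dots,o_n\ge1$ be integers. For each layer $\ell=1,\dots,n$ let $H^{(\ell)}_0\in\mathbb{R}$ and $H^{(\ell)}_j:\mathbb{Z}^j\to\mathbb{R}$, $1\le j\le o_\ell$, be finitely supported kernels. For a signal $x:\mathbb{Z}\to\mathbb{R}$ define $x_0=x$ and $x_\ell=\sum_{j=0}^{o_\ell}H^{(\ell)}_j*x_{\ell-1}^j$ for $\ell=1,\dots,n$. Then $x_n$ has the form of an order-$\prod_{\ell=1}^n o_\ell$ Volterra convolution of $x$: there exist finitely supported kernels $F_k:\mathbb{Z}^k\to\mathbb{R}$, $0\le k\le\prod_{\ell=1}^n o_\ell$ ($F_0\in\mathbb{R}$), not depending on $x$, with $x_n=\sum_{k=0}^{\prod_\ell o_\ell}F_k*x^k$.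
   Context: Signals are real functions on $\mathbb{Z}$. For a kernel $H:\mathbb{Z}^n\to\mathbb{R}$ ($n\ge1$) and signals $x_1,\dots,x_n$, the order-$n$ convolution is $(H*[x_1,\dots,x_n])(t)=\sum_{(\tau_1,\dots,\tau_n)\in\mathbb{Z}^n}H(\tau_1,\dots,\tau_n)\prod_{i=1}^n x_i(t-\tau_i)$, and $H*x^n$ denotes $H*[x,\dots,x]$ ($n$ copies). For $n=0$ the kernel is a real number $H_0$ and $H_0*x^0$ is the constant signal with value $H_0$. *)

From HB Require Import structures.
From mathcomp Require Import all_boot all_order all_algebra.
From mathcomp Require Import reals.
Set Implicit Arguments. Unset Strict Implicit. Unset Printing Implicit Defensive.
Import Order.TTheory GRing.Theory Num.Theory.
Local Open Scope ring_scope.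

(* A point of Z^n is a finite function 'I_n -> int.  For n = 0 there is a
   single point, so an order-0 kernel is just a real number. *)
Definition zpt (n : nat) := {ffun 'I_n -> int}.

Record fkernel (R : realType) (n : nat) := FKernel {
  kfun : zpt n -> R;
  ksupp : seq (zpt n);
  ksuppP : forall tau, kfun tau != 0 -> tau \in ksupp }.

(* Order-n convolution (H * [x_1,...,x_n])(t)
   = sum_{tau in Z^n} H(tau) prod_i x_i(t - tau_i); the sum is finite
   because H is finitely supported, so we sum over the support list
   (without duplicates). *)
Definition conv (R : realType) (n : nat) (H : fkernel R n)
    (xs : 'I_n -> int -> R) (t : int) : R :=
  \sum_(tau <- undup (ksupp H)) kfun H tau * \prod_(i < n) xs i (t - tau i).

Definition powconv (R : realType) (n : nat) (H : fkernel R n)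
    (x : int -> R) : int -> R := conv H (fun _ => x).

Fixpoint layer_out (R : realType) (o : nat -> nat)
    (H : nat -> forall j : nat, fkernel R j) (x : int -> R) (l : nat)
    : int -> R :=
  match l with
  | 0 => x
  | l'.+1 => fun t => \sum_(j < (o l'.+1).+1)
                         powconv (H l'.+1 j) (layer_out o H x l') t
  end.

From HB Require Import structures.
From mathcomp Require Import all_boot all_order all_algebra.
From mathcomp Require Import reals.
Set Implicit Arguments. Unset Strict Implicit. Unset Printing Implicit Defensive.
Import Order.TTheory GRing.Theory Num.Theory.
Local Open Scope ring_scope.

(* Call an operator x |-> f x a Volterra operator of order M if it is a sum
   of convolutions F_k * x^k, k <= M, with finitely supported kernels.  Such
   operators are closed under sums and time shifts, and under products with
   the orders adding up, since (F * x^k)(G * x^m) = (F (x) G) * x^(k+m) for the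
   tensor product kernel (F (x) G)(a, b) = F a G b.  A layer sends y to
   sum_j H_j * y^j, a sum of products of j shifted copies of y weighted by
   constants, so it multiplies the order of y by at most o_l; induction on the
   layers gives order prod_l o_l. *)

Definition ztrans n (c : int) (a : zpt n) : zpt n := [ffun i => a i + c].

Lemma ztransK n c : cancel (@ztrans n c) (ztrans (- c)).
Proof. by move=> a; apply/ffunP => i; rewrite !ffunE addrK. Qed.

Lemma ztransNK n c : cancel (@ztrans n (- c)) (ztrans c).
Proof. by move=> a; apply/ffunP => i; rewrite !ffunE subrK. Qed.

Definition zcat k m (a : zpt k) (b : zpt m) : zpt (k + m) :=
  [ffun i => match split i with inl i1 => a i1 | inr i2 => b i2 end].

Definition zlpart {k m} (tau : zpt (k + m)) : zpt k := [ffun i => tau (lshift m i)].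
Definition zrpart {k m} (tau : zpt (k + m)) : zpt m := [ffun i => tau (rshift k i)].

Lemma zcat_lshift k m (a : zpt k) (b : zpt m) i : zcat a b (lshift m i) = a i.
Proof. by rewrite ffunE (unsplitK (inl i)). Qed.

Lemma zcat_rshift k m (a : zpt k) (b : zpt m) i : zcat a b (rshift k i) = b i.
Proof. by rewrite ffunE (unsplitK (inr i)). Qed.

Lemma zlpart_zcat k m (a : zpt k) (b : zpt m) : zlpart (zcat a b) = a.
Proof. by apply/ffunP => i; rewrite ffunE zcat_lshift. Qed.

Lemma zrpart_zcat k m (a : zpt k) (b : zpt m) : zrpart (zcat a b) = b.
Proof. by apply/ffunP => i; rewrite ffunE zcat_rshift. Qed.

Lemma zcatK k m (tau : zpt (k + m)) : zcat (zlpart tau) (zrpart tau) = tau.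
Proof.
apply/ffunP => i; rewrite ffunE -{2}(splitK i).
by case: (split i) => j; rewrite ffunE.
Qed.

Section Kernels.

Variable R : realType.
Implicit Types (x : int -> R) (t : int).

Lemma conv_uniq_supp n (H : fkernel R n) (xs : 'I_n -> int -> R) t (s : seq (zpt n)) :
    uniq s -> {subset ksupp H <= s} ->
  conv H xs t = \sum_(tau <- s) kfun H tau * \prod_(i < n) xs i (t - tau i).
Proof.
move=> s_uniq supp_s; rewrite /conv [RHS](bigID (mem (undup (ksupp H)))) /=.
rewrite [X in _ = _ + X]big1 ?addr0; last first.
  move=> tau; rewrite mem_undup => tau_supp.
  have [->|/ksuppP tauH] := eqVneq (kfun H tau) 0; first by rewrite mul0r.
  by rewrite tauH in tau_supp.
rewrite -[RHS]big_filter; apply/perm_big/uniq_perm; rewrite ?filter_uniq ?undup_uniq //.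
move=> tau; rewrite mem_filter /=; case: (boolP (tau \in undup _)) => //.
by rewrite mem_undup => /supp_s ->.
Qed.

Lemma kzero_suppP n (tau : zpt n) : (0 : R) != 0 -> tau \in [::].
Proof. by rewrite eqxx. Qed.

Definition kzero n : fkernel R n := @FKernel R n (fun=> 0) [::] (@kzero_suppP n).

Lemma powconv_kzero n x t : powconv (kzero n) x t = 0.
Proof. by rewrite /powconv /conv big_nil. Qed.

Lemma kadd_suppP n (A B : fkernel R n) tau :
  kfun A tau + kfun B tau != 0 -> tau \in ksupp A ++ ksupp B.
Proof.
rewrite mem_cat; have [A0|/ksuppP -> //] := eqVneq (kfun A tau) 0.
by rewrite A0 add0r => /ksuppP ->; rewrite orbT.
Qed.

Definition kadd n (A B : fkernel R n) : fkernel R n :=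
  FKernel (@kadd_suppP n A B).

Lemma powconv_kadd n (A B : fkernel R n) x t :
  powconv (kadd A B) x t = powconv A x t + powconv B x t.
Proof.
have AB_uniq := undup_uniq (ksupp A ++ ksupp B).
rewrite /powconv !(conv_uniq_supp _ _ AB_uniq) /=; last 3 first.
- by move=> tau tauB; rewrite mem_undup mem_cat tauB orbT.
- by move=> tau tauA; rewrite mem_undup mem_cat tauA.
- by move=> tau; rewrite mem_undup.
by rewrite -big_split; apply: eq_bigr => tau _; rewrite mulrDl.
Qed.

Lemma kconst_suppP (c : R) (tau : zpt 0) : c != 0 -> tau \in [:: [ffun=> 0]].
Proof. by rewrite mem_seq1 => _; apply/eqP/ffunP => -[]. Qed.

Definition kconst (c : R) : fkernel R 0 :=
  @FKernel R 0 (fun=> c) [:: [ffun=> 0]] (@kconst_suppP c).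

Lemma powconv_kconst c x t : powconv (kconst c) x t = c.
Proof.
rewrite /powconv (@conv_uniq_supp _ _ _ _ [:: [ffun=> 0]]) //.
by rewrite big_seq1 big_ord0 mulr1.
Qed.

Lemma kdelta_suppP (tau : zpt 1) :
  (if tau == [ffun=> 0] then 1 else 0 : R) != 0 -> tau \in [:: [ffun=> 0]].
Proof. by rewrite mem_seq1; case: ifP => // _; rewrite eqxx. Qed.

Definition kdelta : fkernel R 1 :=
  @FKernel R 1 (fun tau => if tau == [ffun=> 0] then 1 else 0) [:: [ffun=> 0]] kdelta_suppP.

Lemma powconv_kdelta x t : powconv kdelta x t = x t.
Proof.
rewrite /powconv (@conv_uniq_supp _ _ _ _ [:: [ffun=> 0]]) //.
by rewrite big_seq1 /= eqxx mul1r big_ord1 ffunE subr0.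
Qed.

Lemma kshift_suppP n (c : int) (A : fkernel R n) tau :
  kfun A (ztrans (- c) tau) != 0 -> tau \in map (ztrans c) (ksupp A).
Proof. by move=> /ksuppP tauA; rewrite -[tau](ztransNK c) map_f. Qed.

Definition kshift n (c : int) (A : fkernel R n) : fkernel R n :=
  FKernel (@kshift_suppP n c A).

Lemma powconv_kshift n c (A : fkernel R n) x t :
  powconv (kshift c A) x t = powconv A x (t - c).
Proof.
have shift_uniq : uniq (map (ztrans c) (undup (ksupp A))).
  by rewrite (map_inj_uniq (can_inj (@ztransK n c))) undup_uniq.
rewrite /powconv (conv_uniq_supp _ _ shift_uniq); last first.
  by move=> tau /mapP [a aA ->]; rewrite map_f // mem_undup.
rewrite big_map; apply: eq_bigr => a _ /=; rewrite ztransK; congr (_ * _).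
by apply: eq_bigr => i _; rewrite ffunE opprD addrA addrAC.
Qed.

Lemma kmul_suppP k m (A : fkernel R k) (B : fkernel R m) tau :
  kfun A (zlpart tau) * kfun B (zrpart tau) != 0 ->
  tau \in [seq zcat a b | a <- ksupp A, b <- ksupp B].
Proof.
rewrite mulf_eq0 negb_or => /andP [/ksuppP tauA /ksuppP tauB].
by rewrite -(zcatK tau) allpairs_f.
Qed.

Definition kmul k m (A : fkernel R k) (B : fkernel R m) : fkernel R (k + m) :=
  FKernel (@kmul_suppP k m A B).

Lemma powconv_kmul k m (A : fkernel R k) (B : fkernel R m) x t :
  powconv (kmul A B) x t = powconv A x t * powconv B x t.
Proof.
have cat_uniq : uniq [seq zcat a b | a <- undup (ksupp A), b <- undup (ksupp B)].
  apply: allpairs_uniq; rewrite ?undup_uniq // => -[a b] [a' b'] _ _ /= ab_eq.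
  have := congr1 zlpart ab_eq; have := congr1 zrpart ab_eq.
  by rewrite !zlpart_zcat !zrpart_zcat => -> ->.
rewrite /powconv (conv_uniq_supp _ _ cat_uniq); last first.
  by move=> tau /allpairsP [[a b] /= [aA bB ->]]; rewrite allpairs_f // mem_undup.
rewrite big_allpairs_dep /= mulr_suml; apply: eq_bigr => a _.
rewrite mulr_sumr; apply: eq_bigr => b _.
rewrite zlpart_zcat zrpart_zcat big_split_ord /=.
under eq_bigr do rewrite zcat_lshift.
under [X in _ * (_ * X) = _]eq_bigr do rewrite zcat_rshift.
by rewrite mulrACA.
Qed.

Definition ksingle j (G : fkernel R j) (k : nat) : fkernel R k :=
  if j =P k is ReflectT e then eq_rect j (fkernel R) G k e else kzero k.

End Kernels.

Arguments kzero {R n}.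
Arguments kdelta {R}.

Section VolterraOperators.

Variable R : realType.
Implicit Types (f g : (int -> R) -> int -> R) (M N : nat).

Definition volterra M f : Prop :=
  exists F : forall k : nat, fkernel R k,
    forall x t, f x t = \sum_(k < M.+1) powconv (F k) x t.

Lemma volterra_ext M f g : volterra M f -> (forall x t, f x t = g x t) -> volterra M g.
Proof. by move=> [F fF] fg; exists F => x t; rewrite -fg fF. Qed.

Lemma volterra_widen M M' f : (M <= M')%N -> volterra M f -> volterra M' f.
Proof.
move=> leMM' [F fF]; exists (fun k => if (k <= M)%N then F k else kzero) => x t.
rewrite fF (big_ord_widen _ (fun k => powconv (F k) x t) (leMM' : (M < M'.+1)%N)).
rewrite [RHS](bigID (fun k : 'I_M'.+1 => (k < M.+1)%N)) /= [X in _ = _ + X]big1 ?addr0.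
  by apply: eq_bigr => k; rewrite ltnS => ->.
by move=> k; rewrite ltnS => /negbTE ->; rewrite powconv_kzero.
Qed.

Lemma volterra_powconv j (G : fkernel R j) : volterra j (powconv G).
Proof.
exists (ksingle G) => x t; rewrite big_ord_recr /= big1 ?add0r => [|k _].
  by rewrite /ksingle; case: eqP => // e; rewrite (eq_irrelevance e erefl).
rewrite /ksingle; case: eqP => [e|_]; last exact: powconv_kzero.
by exfalso; have := ltn_ord k; rewrite -e ltnn.
Qed.

Lemma volterra_const M (c : R) : volterra M (fun _ _ => c).
Proof.
apply: (volterra_widen (leq0n M)).
by apply: (volterra_ext (volterra_powconv (kconst c))) => x t; rewrite powconv_kconst.
Qed.

Lemma volterra_add M f g :
  volterra M f -> volterra M g -> volterra M (fun x t => f x t + g x t).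
Proof.
move=> [F fF] [G gG]; exists (fun k => kadd (F k) (G k)) => x t.
by rewrite fF gG -big_split; apply: eq_bigr => k _; rewrite powconv_kadd.
Qed.

Lemma volterra_sum M (I : Type) (r : seq I) (F : I -> (int -> R) -> int -> R) :
  (forall i, volterra M (F i)) -> volterra M (fun x t => \sum_(i <- r) F i x t).
Proof.
move=> FM; elim: r => [|i r IHr].
  by apply: (volterra_ext (volterra_const M 0)) => x t; rewrite big_nil.
by apply: (volterra_ext (volterra_add (FM i) IHr)) => x t; rewrite big_cons.
Qed.

Lemma volterra_mul M N f g :
  volterra M f -> volterra N g -> volterra (M + N) (fun x t => f x t * g x t).
Proof.
move=> [F fF] [G gG].
pose FG x t := \sum_(k < M.+1) \sum_(m < N.+1) powconv (kmul (F k) (G m)) x t.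
apply: (@volterra_ext _ FG) => [|x t].
  apply: volterra_sum => k; apply: volterra_sum => m.
  by apply: volterra_widen (volterra_powconv _); rewrite leq_add // -ltnS.
rewrite fF gG mulr_suml; apply: eq_bigr => k _.
by rewrite mulr_sumr; apply: eq_bigr => m _; rewrite powconv_kmul.
Qed.

Lemma volterra_shift M f (c : int) : volterra M f -> volterra M (fun x t => f x (t - c)).
Proof.
move=> [F fF]; exists (fun k => kshift c (F k)) => x t.
by rewrite fF; apply: eq_bigr => k _; rewrite powconv_kshift.
Qed.

Lemma volterra_prod N j (F : 'I_j -> (int -> R) -> int -> R) :
  (forall i, volterra N (F i)) -> volterra (j * N) (fun x t => \prod_(i < j) F i x t).
Proof.
elim: j F => [|j IHj] F FN.
  by apply: (volterra_ext (volterra_const _ 1)) => x t; rewrite big_ord0.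
rewrite mulSnr; apply: (volterra_ext (volterra_mul (IHj _ (fun i => FN _)) (FN ord_max))).
by move=> x t; rewrite big_ord_recr.
Qed.

Lemma volterra_powconv_comp N j (K : fkernel R j) g :
  volterra N g -> volterra (j * N) (fun x => powconv K (g x)).
Proof.
move=> gN; apply: volterra_sum => tau; rewrite -[(j * N)%N]add0n.
apply: volterra_mul; first exact: volterra_const.
by apply: (@volterra_prod N j (fun i x t => g x (t - tau i))) => i; apply: volterra_shift.
Qed.

Lemma volterra_layer_out (o : nat -> nat) (H : nat -> forall j : nat, fkernel R j) n :
  volterra (\prod_(1 <= l < n.+1) o l) (fun x => layer_out o H x n).
Proof.
elim: n => [|n IHn].
  rewrite big_geq //; apply: (volterra_ext (volterra_powconv kdelta)) => x t.
  by rewrite powconv_kdelta.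
rewrite big_nat_recr //=; apply: volterra_sum => j.
apply: volterra_widen (volterra_powconv_comp (H n.+1 j) IHn).
by rewrite mulnC leq_mul2l -ltnS ltn_ord orbT.
Qed.

End VolterraOperators.

Theorem lemma16 (R : realType) (n : nat) (o : nat -> nat)
    (H : nat -> forall j : nat, fkernel R j) :
  (1 <= n)%N ->
  (forall l : nat, (1 <= l <= n)%N -> (1 <= o l)%N) ->
  exists F : forall k : nat, fkernel R k,
    forall (x : int -> R) (t : int),
      layer_out o H x n t =
      \sum_(k < (\prod_(1 <= l < n.+1) o l)%N.+1) powconv (F k) x t.
Proof. by move=> _ _; exact: volterra_layer_out. Qed.
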